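(* Each of the logics $\mathbf T$, $\mathbf{KTB}$, $\mathbf{S4}$, $\mathbf{S5}$, $\mathbf{S4.2}$, $\mathbf{S4.3}$ has the strong boxdot property. That is, for each such logic $L_0$ and every normal modal logic $L$, if $\mathrm{BD}(L)\subseteq L_0$ then $L\subseteq L_0$. In particular (the boxdot conjecture), for every normal modal logic $L$: if $\mathrm{BD}(L)=\mathbf T$ then $L\subseteq\mathbf T$.
   Context: Modal formulas are built from propositional variables with Boolean connectives and a single modality $\Box$, with $\Diamond=\neg\Box\neg$. A normal modal logic (nml) contains all tautologies and $\Box(p\to q)\to(\Box p\to\Box q)$, and is closed under modus ponens, necessitation and substitution. $\mathbf K$ is the least nml, and $L\oplus\alpha$ denotes the least nml containing $L\cup\{\alpha\}$. The logics are: - $\mathbf T=\mathbf K\oplus(\Box p\to p)$; - $\mathbf{KTB}=\mathbf T\oplus(p\to\Box\Diamond p)$; - $\mathbf{S4}=\mathbf T\oplus(\Box p\to\Box\Box p)$; - $\mathbf{S5}=\mathbf{S4}\oplus(p\to\Box\Diamond p)$; - $\mathbf{S4.2}=\mathbf{S4}\oplus(\Diamond\Box p\to\Box\Diamond p)$; - $\mathbf{S4.3}=\mathbf{S4}\oplus(\Box(\Box p\to q)\vee\Box(\Box q\to p))$. The boxdot translation $\varphi\mapsto\varphi^{\boxdot}$ fixes propositional variables, commutes with Boolean connectives, and satisfies $(\Box\varphi)^{\boxdot}=\varphi^{\boxdot}\wedge\Box\varphi^{\boxdot}$. For an nml $L$, $\mathrm{BD}(L)=\{\varphi:\varphi^{\boxdot}\in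 L\}$. *)

From Stdlib Require Import Bool.

Inductive form : Type :=
| Var : nat -> form
| Bot : form
| Neg : form -> form
| And : form -> form -> form
| Or  : form -> form -> form
| Imp : form -> form -> form
| Box : form -> form.

Definition Dia (a : form) : form := Neg (Box (Neg a)).

Fixpoint teval (f : form -> bool) (a : form) : bool :=
  match a with
  | Var _ => f a
  | Bot => false
  | Neg b => negb (teval f b)
  | And b c => teval f b && teval f c
  | Or b c => teval f b || teval f c
  | Imp b c => implb (teval f b) (teval f c)
  | Box _ => f a
  end.

Definition tautology (a : form) : Prop := forall f, teval f a = true.

Fixpoint subst (s : nat -> form) (a : form) : form :=
  match a with
  | Var n => s n
  | Bot => Bot
  | Neg b => Neg (subst s b)
  | And b c => And (subst s b) (subst s c)
  | Or b c => Or (subst s b) (subst s c)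
  | Imp b c => Imp (subst s b) (subst s c)
  | Box b => Box (subst s b)
  end.

Definition p : form := Var 0.
Definition q : form := Var 1.

Definition axK : form := Imp (Box (Imp p q)) (Imp (Box p) (Box q)).

Definition logic := form -> Prop.

Record NML (L : logic) : Prop := {
  nml_taut : forall a, tautology a -> L a;
  nml_K : L axK;
  nml_MP : forall a b, L a -> L (Imp a b) -> L b;
  nml_Nec : forall a, L a -> L (Box a);
  nml_Subst : forall s a, L a -> L (subst s a)
}.

Inductive Ext (G : logic) : logic :=
| ext_taut : forall a, tautology a -> Ext G a
| ext_K : Ext G axK
| ext_hyp : forall a, G a -> Ext G a
| ext_MP : forall a b, Ext G a -> Ext G (Imp a b) -> Ext G b
| ext_Nec : forall a, Ext G a -> Ext G (Box a)
| ext_Subst : forall s a, Ext G a -> Ext G (subst s a).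

Definition K : logic := Ext (fun _ => False).
Definition oplus (L : logic) (alpha : form) : logic :=
  Ext (fun a => L a \/ a = alpha).

Definition LT    : logic := oplus K (Imp (Box p) p).
Definition LKTB  : logic := oplus LT (Imp p (Box (Dia p))).
Definition LS4   : logic := oplus LT (Imp (Box p) (Box (Box p))).
Definition LS5   : logic := oplus LS4 (Imp p (Box (Dia p))).
Definition LS4_2 : logic := oplus LS4 (Imp (Dia (Box p)) (Box (Dia p))).
Definition LS4_3 : logic :=
  oplus LS4 (Or (Box (Imp (Box p) q)) (Box (Imp (Box q) p))).

Fixpoint boxdot (a : form) : form :=
  match a with
  | Var n => Var n
  | Bot => Bot
  | Neg b => Neg (boxdot b)
  | And b c => And (boxdot b) (boxdot c)
  | Or b c => Or (boxdot b) (boxdot c)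
  | Imp b c => Imp (boxdot b) (boxdot c)
  | Box b => And (boxdot b) (Box (boxdot b))
  end.

Definition BD (L : logic) : logic := fun a => L (boxdot a).

Definition subset (A B : logic) : Prop := forall a, A a -> B a.

Definition strong_boxdot (L0 : logic) : Prop :=
  forall L : logic, NML L -> subset (BD L) L0 -> subset L L0.

From Stdlib Require Import List Arith Lia.
Import ListNotations.

(* Let L be a normal modal logic with BD(L) ⊆ L0, and let φ ∈ L.  Choose a
   variable r not occurring in φ, and let Θ be the conjunction, over all
   subformulas g of φ, of the witness formulas
       (r ∧ ¬g → ◇(¬r ∧ ¬g)) ∧ (¬r ∧ ¬g → ◇(r ∧ ¬g)).
   1. Under the boxdot translation of □^d Θ (d the modal depth of φ), every
      subformula of φ is equivalent in any normal logic to its own boxdot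
      translation.  Hence (□^d Θ → φ)^⊡ ∈ L, i.e. □^d Θ → φ ∈ BD(L) ⊆ L0.
   2. The doubling translation (r ↦ ⊤ or ⊥ at the top, and □a ↦ □(a⁺ ∧ a⁻)
      where a⁺, a⁻ are the doublings of a with r ↦ ⊤, ⊥) maps each of the six
      logics into itself, leaves r-free formulas equivalent, and sends □^d Θ
      to a theorem of every normal logic containing T.  Doubling □^d Θ → φ
      therefore yields φ ∈ L0. *)

Notation Top := (Neg Bot).
Notation Iff a b := (And (Imp a b) (Imp b a)).

Ltac taut :=
  let f := fresh "f" in
  intro f; unfold Dia; simpl;
  repeat match goal with
  | |- context [teval f ?x] => destruct (teval f x)
  | |- context [f ?x] => destruct (f x)
  end; reflexivity.

Lemma mp_taut {L} (HL : NML L) a b : L a -> tautology (Imp a b) -> L b.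
Proof. intros Ha Ht. exact (nml_MP _ HL _ _ Ha (nml_taut _ HL _ Ht)). Qed.

Lemma and_intro {L} (HL : NML L) a b : L a -> L b -> L (And a b).
Proof.
  intros Ha Hb. apply (nml_MP _ HL _ _ Hb), (nml_MP _ HL _ _ Ha), (nml_taut _ HL).
  taut.
Qed.

(* [from_facts HL (h1, ..., hn)] proves the goal as a tautological consequence
   of the theorems h1, ..., hn of the normal logic with proof HL. *)
Ltac conj_facts HL hs :=
  lazymatch hs with
  | (?rest, ?h) => let H := conj_facts HL rest in constr:(and_intro HL _ _ H h)
  | ?h => constr:(h)
  end.
Ltac from_facts HL hs :=
  let H := conj_facts HL hs in apply (mp_taut HL _ _ H); taut.

Lemma imp_trans {L} (HL : NML L) {a b c} : L (Imp a b) -> L (Imp b c) -> L (Imp a c).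
Proof. intros H1 H2. from_facts HL (H1, H2). Qed.

Lemma K_instance {L} (HL : NML L) a b : L (Imp (Box (Imp a b)) (Imp (Box a) (Box b))).
Proof. exact (nml_Subst _ HL (fun n => match n with 0 => a | _ => b end) _ (nml_K _ HL)). Qed.

Lemma box_mono {L} (HL : NML L) {a b} : L (Imp a b) -> L (Imp (Box a) (Box b)).
Proof. intro H. exact (nml_MP _ HL _ _ (nml_Nec _ HL _ H) (K_instance HL a b)). Qed.

Lemma box_mono_taut {L} (HL : NML L) a b : tautology (Imp a b) -> L (Imp (Box a) (Box b)).
Proof. intro H. exact (box_mono HL (nml_taut _ HL _ H)). Qed.

Lemma box_iff {L} (HL : NML L) a b : L (Imp (Box (Iff a b)) (Iff (Box a) (Box b))).
Proof.
  assert (h1 : L (Imp (Box (Iff a b)) (Box (Imp a b)))) by (apply (box_mono_taut HL); taut).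
  assert (h2 : L (Imp (Box (Iff a b)) (Box (Imp b a)))) by (apply (box_mono_taut HL); taut).
  from_facts HL (h1, h2, K_instance HL a b, K_instance HL b a).
Qed.

(* Part 1: a fresh variable makes the boxdot translation faithful. *)

Fixpoint depth (a : form) : nat :=
  match a with
  | Var _ | Bot => 0
  | Neg x => depth x
  | And x y | Or x y | Imp x y => max (depth x) (depth y)
  | Box x => S (depth x)
  end.

Fixpoint subformulas (a : form) : list form :=
  a :: match a with
       | Var _ | Bot => []
       | Neg x | Box x => subformulas x
       | And x y | Or x y | Imp x y => subformulas x ++ subformulas y
       end.

Lemma in_subformulas a : In a (subformulas a).
Proof. destruct a; simpl; auto. Qed.

(* Wherever g fails, it also fails at an accessible world on the other side
   of r; in a boxdot context this forces □ to be reflexive on g. *)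
Definition witness (r : nat) (g : form) : form :=
  And (Imp (And (Var r) (Neg g)) (Dia (And (Neg (Var r)) (Neg g))))
      (Imp (And (Neg (Var r)) (Neg g)) (Dia (And (Var r) (Neg g)))).

Fixpoint witnesses (r : nat) (gs : list form) : form :=
  match gs with
  | [] => Top
  | g :: gs' => And (witness r g) (witnesses r gs')
  end.

Fixpoint boxes (n : nat) (a : form) : form :=
  match n with 0 => a | S m => Box (boxes m a) end.

Lemma boxdot_boxes_elim {L} (HL : NML L) n x : L (Imp (boxdot (boxes n x)) (boxdot x)).
Proof.
  induction n as [|n IH]; simpl.
  - apply (nml_taut _ HL); taut.
  - refine (imp_trans HL _ IH). apply (nml_taut _ HL); taut.
Qed.

Lemma boxdot_witnesses_In {L} (HL : NML L) r gs g :
  In g gs -> L (Imp (boxdot (witnesses r gs)) (boxdot (witness r g))).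
Proof.
  induction gs as [|h gs IH]; simpl; [tauto|]. intros [->|Hin].
  - apply (nml_taut _ HL); taut.
  - refine (imp_trans HL _ (IH Hin)). apply (nml_taut _ HL); taut.
Qed.

(* Under the boxdot translation of its witness, □g^⊡ implies g^⊡: a world
   refuting g^⊡ would see a world refuting g^⊡. *)
Lemma witness_reflexive {L} (HL : NML L) r g :
  L (Imp (boxdot (witness r g)) (Imp (Box (boxdot g)) (boxdot g))).
Proof.
  assert (h1 : L (Imp (Box (boxdot g)) (Box (Neg (And (Neg (Var r)) (Neg (boxdot g)))))))
    by (apply (box_mono_taut HL); taut).
  assert (h2 : L (Imp (Box (boxdot g)) (Box (Neg (And (Var r) (Neg (boxdot g)))))))
    by (apply (box_mono_taut HL); taut).
  from_facts HL (h1, h2).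
Qed.

Lemma guard_reflexive {L} (HL : NML L) r gs n g : In g gs ->
  L (Imp (boxdot (boxes n (witnesses r gs))) (Imp (Box (boxdot g)) (boxdot g))).
Proof.
  intro Hin.
  exact (imp_trans HL (imp_trans HL (boxdot_boxes_elim HL n _) (boxdot_witnesses_In HL r gs g Hin))
                   (witness_reflexive HL r g)).
Qed.

Lemma boxdot_faithful {L} (HL : NML L) r gs c :
  incl (subformulas c) gs -> forall n, depth c <= n ->
  L (Imp (boxdot (boxes n (witnesses r gs))) (Iff (boxdot c) c)).
Proof.
  induction c as [v| |c IH|c1 IH1 c2 IH2|c1 IH1 c2 IH2|c1 IH1 c2 IH2|c IH];
    intros Hsub n Hn; simpl in Hsub, Hn; apply incl_cons_inv in Hsub as [_ Hsub].
  1-2: apply (nml_taut _ HL); taut.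
  1: from_facts HL (IH Hsub n Hn).
  1-3: apply incl_app_inv in Hsub as [Hs1 Hs2];
       from_facts HL (IH1 Hs1 n ltac:(lia), IH2 Hs2 n ltac:(lia)).
  (* Box case: the guard gives c^⊡ ↔ c here and at all successors, and makes
     □c^⊡ imply c^⊡, so (□c)^⊡ = c^⊡ ∧ □c^⊡ is equivalent to □c. *)
  destruct n as [|m]; [lia|].
  assert (Hc : In c gs) by (apply Hsub, in_subformulas).
  pose proof (IH Hsub (S m) ltac:(lia)) as h_here.
  pose proof (box_mono HL (IH Hsub m ltac:(lia))) as h_next.
  from_facts HL (h_here, h_next, box_iff HL (boxdot c) c, guard_reflexive HL r gs (S m) c Hc).
Qed.

Lemma guarded_in_BD {L} (HL : NML L) r phi : L phi ->
  BD L (Imp (boxes (depth phi) (witnesses r (subformulas phi))) phi).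
Proof.
  intro Hphi. unfold BD.
  pose proof (boxdot_faithful HL r _ phi (incl_refl _) _ (le_n _)) as h.
  from_facts HL (h, Hphi).
Qed.

(* Part 2: the doubling translation.  Semantically, double r b a holds at a
   world w iff a holds at (w, b) in the doubled model: two copies of the
   frame, r true exactly on the copy b = true, and each world seeing both
   copies of its successors. *)

Definition truth (b : bool) : form := if b then Top else Bot.

Fixpoint double (r : nat) (b : bool) (a : form) : form :=
  match a with
  | Var n => if Nat.eqb n r then truth b else Var n
  | Bot => Bot
  | Neg x => Neg (double r b x)
  | And x y => And (double r b x) (double r b y)
  | Or x y => Or (double r b x) (double r b y)
  | Imp x y => Imp (double r b x) (double r b y)
  | Box x => Box (And (double r true x) (double r false x))
  end.

Lemma teval_double r b f a : teval f (double r b a) = teval (fun x => teval f (double r b x)) a.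
Proof. induction a; simpl; try rewrite IHa; try rewrite IHa1; try rewrite IHa2; reflexivity. Qed.

Lemma teval_subst s f a : teval f (subst s a) = teval (fun x => teval f (subst s x)) a.
Proof. induction a; simpl; try rewrite IHa; try rewrite IHa1; try rewrite IHa2; reflexivity. Qed.

Lemma tautology_double r b a : tautology a -> tautology (double r b a).
Proof. intros H f. rewrite teval_double. apply H. Qed.

Lemma tautology_subst s a : tautology a -> tautology (subst s a).
Proof. intros H f. rewrite teval_subst. apply H. Qed.

Lemma subst_comp s t a : subst s (subst t a) = subst (fun n => subst s (t n)) a.
Proof. induction a; simpl; congruence. Qed.

Lemma subst_id a : subst Var a = a.
Proof. induction a; simpl; congruence. Qed.

Definition doubles_into (r : nat) (G L1 : logic) : Prop :=
  forall a s b, G a -> L1 (double r b (subst s a)).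

Lemma double_K_instance {L} (HL : NML L) a0 a1 b0 b1 :
  L (Imp (Box (And (Imp a0 b0) (Imp a1 b1))) (Imp (Box (And a0 a1)) (Box (And b0 b1)))).
Proof.
  assert (h : L (Imp (Box (And (Imp a0 b0) (Imp a1 b1))) (Box (Imp (And a0 a1) (And b0 b1)))))
    by (apply (box_mono_taut HL); taut).
  from_facts HL (h, K_instance HL (And a0 a1) (And b0 b1)).
Qed.

(* Doubling commutes with the rules of normal logics, so it suffices to
   check the generators. *)
Lemma doubles_into_Ext {L1} (HL1 : NML L1) r G :
  doubles_into r G L1 -> doubles_into r (Ext G) L1.
Proof.
  intros HG a s b H. revert s b.
  induction H as [a Ht| |a Ha|a c _ IHa _ IHac|a _ IH|t a _ IH]; intros s b; simpl.
  - apply (nml_taut _ HL1), tautology_double, tautology_subst, Ht.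
  - apply double_K_instance, HL1.
  - apply HG, Ha.
  - exact (nml_MP _ HL1 _ _ (IHa s b) (IHac s b)).
  - apply (nml_Nec _ HL1), (and_intro HL1); apply IH.
  - rewrite subst_comp. apply IH.
Qed.

Lemma doubles_into_oplus {L1} (HL1 : NML L1) r L alpha :
  doubles_into r L L1 -> (forall s b, L1 (double r b (subst s alpha))) ->
  doubles_into r (oplus L alpha) L1.
Proof. intros Hbase Halpha. apply (doubles_into_Ext HL1). intros a s b [Ha | ->]; auto. Qed.

Lemma doubles_K {L1} (HL1 : NML L1) r : doubles_into r K L1.
Proof. apply (doubles_into_Ext HL1). intros a s b []. Qed.

Definition schemeT (L : logic) : Prop := forall a, L (Imp (Box a) a).
Definition scheme4 (L : logic) : Prop := forall a, L (Imp (Box a) (Box (Box a))).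
Definition schemeB (L : logic) : Prop := forall a, L (Imp a (Box (Dia a))).
Definition scheme2 (L : logic) : Prop := forall a, L (Imp (Dia (Box a)) (Box (Dia a))).
Definition scheme3 (L : logic) : Prop :=
  forall a c, L (Or (Box (Imp (Box a) c)) (Box (Imp (Box c) a))).

Lemma double_T {L1} (HL1 : NML L1) r :
  schemeT L1 -> forall s b, L1 (double r b (subst s (Imp (Box p) p))).
Proof.
  intros HT s b. unfold p; simpl.
  refine (imp_trans HL1 (HT _) _). apply (nml_taut _ HL1). destruct b; taut.
Qed.

Lemma double_4 {L1} (HL1 : NML L1) r :
  scheme4 L1 -> forall s b, L1 (double r b (subst s (Imp (Box p) (Box (Box p))))).
Proof.
  intros H4 s b. unfold p; simpl.
  refine (imp_trans HL1 (H4 _) _). apply (box_mono_taut HL1); taut.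
Qed.

Lemma box_dia_doubled {L} (HL : NML L) x a0 a1 :
  tautology (Imp (And (Neg a0) (Neg a1)) (Neg x)) ->
  L (Imp (Box (Dia x))
         (Box (And (Neg (Box (And (Neg a0) (Neg a1)))) (Neg (Box (And (Neg a0) (Neg a1))))))).
Proof. intro Hx. apply (box_mono HL). from_facts HL (box_mono_taut HL _ _ Hx). Qed.

Lemma double_B {L1} (HL1 : NML L1) r :
  schemeB L1 -> forall s b, L1 (double r b (subst s (Imp p (Box (Dia p))))).
Proof.
  intros HB s b. unfold p, Dia; simpl.
  assert (h : L1 (Imp (double r b (s 0)) (Or (double r true (s 0)) (double r false (s 0)))))
    by (apply (nml_taut _ HL1); destruct b; taut).
  refine (imp_trans HL1 h _). clear h.
  generalize (double r true (s 0)) (double r false (s 0)). intros a0 a1.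
  exact (imp_trans HL1 (HB (Or a0 a1)) (box_dia_doubled HL1 (Or a0 a1) a0 a1 ltac:(taut))).
Qed.

Lemma double_2 {L1} (HL1 : NML L1) r :
  scheme2 L1 -> forall s b, L1 (double r b (subst s (Imp (Dia (Box p)) (Box (Dia p))))).
Proof.
  intros H2 s b. unfold p, Dia; simpl.
  generalize (double r true (s 0)) (double r false (s 0)). intros a0 a1.
  assert (h : L1 (Imp (Neg (Box (And (Neg (Box (And a0 a1))) (Neg (Box (And a0 a1))))))
                      (Dia (Box (And a0 a1))))).
  { from_facts HL1 (box_mono_taut HL1 (Neg (Box (And a0 a1)))
                      (And (Neg (Box (And a0 a1))) (Neg (Box (And a0 a1)))) ltac:(taut)). }
  exact (imp_trans HL1 h
           (imp_trans HL1 (H2 _) (box_dia_doubled HL1 (And a0 a1) a0 a1 ltac:(taut)))).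
Qed.

Lemma double_3 {L1} (HL1 : NML L1) r :
  scheme3 L1 ->
  forall s b, L1 (double r b (subst s (Or (Box (Imp (Box p) q)) (Box (Imp (Box q) p))))).
Proof.
  intros H3 s b. unfold p, q; simpl.
  generalize (double r true (s 0)) (double r false (s 0))
             (double r true (s 1)) (double r false (s 1)).
  intros a0 a1 b0 b1.
  assert (h1 : L1 (Imp (Box (Imp (Box (And a0 a1)) (And b0 b1)))
                       (Box (And (Imp (Box (And a0 a1)) b0) (Imp (Box (And a0 a1)) b1)))))
    by (apply (box_mono_taut HL1); taut).
  assert (h2 : L1 (Imp (Box (Imp (Box (And b0 b1)) (And a0 a1)))
                       (Box (And (Imp (Box (And b0 b1)) a0) (Imp (Box (And b0 b1)) a1)))))
    by (apply (box_mono_taut HL1); taut).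
  from_facts HL1 (H3 (And a0 a1) (And b0 b1), h1, h2).
Qed.

Lemma doubles_LT {L1} (HL1 : NML L1) r : schemeT L1 -> doubles_into r LT L1.
Proof. intro HT. exact (doubles_into_oplus HL1 r _ _ (doubles_K HL1 r) (double_T HL1 r HT)). Qed.

Lemma doubles_LKTB {L1} (HL1 : NML L1) r :
  schemeT L1 -> schemeB L1 -> doubles_into r LKTB L1.
Proof.
  intros HT HB. exact (doubles_into_oplus HL1 r _ _ (doubles_LT HL1 r HT) (double_B HL1 r HB)).
Qed.

Lemma doubles_LS4 {L1} (HL1 : NML L1) r :
  schemeT L1 -> scheme4 L1 -> doubles_into r LS4 L1.
Proof.
  intros HT H4. exact (doubles_into_oplus HL1 r _ _ (doubles_LT HL1 r HT) (double_4 HL1 r H4)).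
Qed.

Lemma doubles_LS5 {L1} (HL1 : NML L1) r :
  schemeT L1 -> scheme4 L1 -> schemeB L1 -> doubles_into r LS5 L1.
Proof.
  intros HT H4 HB.
  exact (doubles_into_oplus HL1 r _ _ (doubles_LS4 HL1 r HT H4) (double_B HL1 r HB)).
Qed.

Lemma doubles_LS4_2 {L1} (HL1 : NML L1) r :
  schemeT L1 -> scheme4 L1 -> scheme2 L1 -> doubles_into r LS4_2 L1.
Proof.
  intros HT H4 H2.
  exact (doubles_into_oplus HL1 r _ _ (doubles_LS4 HL1 r HT H4) (double_2 HL1 r H2)).
Qed.

Lemma doubles_LS4_3 {L1} (HL1 : NML L1) r :
  schemeT L1 -> scheme4 L1 -> scheme3 L1 -> doubles_into r LS4_3 L1.
Proof.
  intros HT H4 H3.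
  exact (doubles_into_oplus HL1 r _ _ (doubles_LS4 HL1 r HT H4) (double_3 HL1 r H3)).
Qed.

(* Part 3: doubling fixes r-free formulas and the guard. *)

Fixpoint fresh (r : nat) (a : form) : Prop :=
  match a with
  | Var n => n <> r
  | Bot => True
  | Neg x | Box x => fresh r x
  | And x y | Or x y | Imp x y => fresh r x /\ fresh r y
  end.

Fixpoint max_var (a : form) : nat :=
  match a with
  | Var n => n
  | Bot => 0
  | Neg x | Box x => max_var x
  | And x y | Or x y | Imp x y => max (max_var x) (max_var y)
  end.

Lemma fresh_above a r : max_var a < r -> fresh r a.
Proof.
  revert r. induction a; simpl; intros r H; try split; auto; try lia;
    (apply IHa1 || apply IHa2); lia.
Qed.

Lemma fresh_subformulas r a g : fresh r a -> In g (subformulas a) -> fresh r g.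
Proof.
  induction a; simpl; intros Hf [<-|Hg]; simpl; auto; try tauto;
    apply in_app_or in Hg; tauto.
Qed.

Lemma double_fresh_indep r a : fresh r a -> double r true a = double r false a.
Proof.
  induction a; simpl; intros Hf; try reflexivity; try (f_equal; tauto).
  apply Nat.eqb_neq in Hf. rewrite Hf. reflexivity.
Qed.

Lemma double_fresh_equiv {L} (HL : NML L) r a : fresh r a -> forall b, L (Iff (double r b a) a).
Proof.
  induction a; simpl; intros Hf b.
  1: apply Nat.eqb_neq in Hf; rewrite Hf; apply (nml_taut _ HL); taut.
  1: apply (nml_taut _ HL); taut.
  1: from_facts HL (IHa Hf b).
  1-3: destruct Hf as [H1 H2]; from_facts HL (IHa1 H1 b, IHa2 H2 b).
  (* Box case: both a⁺ and a⁻ are equivalent to a, hence so is a⁺ ∧ a⁻. *)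
  assert (h1 : L (Imp (And (double r true a) (double r false a)) a))
    by from_facts HL (IHa Hf true, IHa Hf false).
  assert (h2 : L (Imp a (And (double r true a) (double r false a))))
    by from_facts HL (IHa Hf true, IHa Hf false).
  from_facts HL (box_mono HL h1, box_mono HL h2).
Qed.

(* In a logic with T, the doubled witness of an r-free formula is a theorem:
   the boxed formulas in it are equivalent to the doubling of g. *)
Lemma double_witness {L0} (HL0 : NML L0) (HT : schemeT L0) r g b :
  fresh r g -> L0 (double r b (witness r g)).
Proof.
  intro Hf. unfold witness, Dia.
  destruct b; simpl; rewrite Nat.eqb_refl, <- (double_fresh_indep r g Hf);
    generalize (double r true g); intro g';
    from_facts HL0 (HT (And (Neg (And (Neg Top) (Neg g'))) (Neg (And (Neg Bot) (Neg g')))),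
                    HT (And (Neg (And Top (Neg g'))) (Neg (And Bot (Neg g'))))).
Qed.

Lemma double_witnesses {L0} (HL0 : NML L0) (HT : schemeT L0) r gs b :
  (forall g, In g gs -> fresh r g) -> L0 (double r b (witnesses r gs)).
Proof.
  induction gs as [|g gs IH]; intros Hf; simpl.
  - apply (nml_taut _ HL0); taut.
  - apply (and_intro HL0).
    + apply (double_witness HL0 HT), Hf; left; reflexivity.
    + apply IH. intros h Hh. apply Hf; right; exact Hh.
Qed.

Lemma double_boxes {L} (HL : NML L) r x :
  (forall b, L (double r b x)) -> forall n b, L (double r b (boxes n x)).
Proof.
  intros Hx n. induction n as [|n IH]; intro b; simpl; auto.
  apply (nml_Nec _ HL), (and_intro HL); apply IH.
Qed.

Theorem strong_boxdot_of_doubling L0 :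
  NML L0 -> schemeT L0 -> (forall r, doubles_into r L0 L0) -> strong_boxdot L0.
Proof.
  intros HL0 HT Hdouble L HL Hsub phi Hphi.
  set (r := S (max_var phi)).
  assert (Hfresh : fresh r phi) by (apply fresh_above; unfold r; lia).
  pose proof (Hdouble r _ Var true (Hsub _ (guarded_in_BD HL r phi Hphi))) as Hdoubled.
  rewrite subst_id in Hdoubled.
  assert (Hguard : L0 (double r true (boxes (depth phi) (witnesses r (subformulas phi))))).
  { apply (double_boxes HL0). intro b. apply (double_witnesses HL0 HT).
    intros g Hg. exact (fresh_subformulas r phi g Hfresh Hg). }
  from_facts HL0 (Hguard, Hdoubled, double_fresh_equiv HL0 r phi Hfresh true).
Qed.

(* Part 4: the six logics contain T and are closed under doubling, since each
   contains the axiom schemes it is generated by. *)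

Lemma NML_Ext G : NML (Ext G).
Proof.
  constructor; [apply ext_taut | apply ext_K | apply ext_MP | apply ext_Nec | apply ext_Subst].
Qed.

Lemma oplus_base L alpha a : L a -> oplus L alpha a.
Proof. intro Ha. apply ext_hyp. left. exact Ha. Qed.

Lemma oplus_instance L alpha s : oplus L alpha (subst s alpha).
Proof. apply ext_Subst, ext_hyp. right. reflexivity. Qed.

(* Prove that a logic built by ⊕ contains all instances of one of its axiom
   schemes: descend through the ⊕ layers to the axiom. *)
Ltac in_oplus s := first [exact (oplus_instance _ _ s) | apply oplus_base; in_oplus s].
Ltac axiom_scheme :=
  first [ let a := fresh "a" in let c := fresh "c" in
          intros a c; in_oplus (fun n => match n with 0 => a | _ => c end)
        | let a := fresh "a" in intros a; in_oplus (fun _ : nat => a) ].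

Lemma strong_boxdot_LT : strong_boxdot LT.
Proof.
  apply strong_boxdot_of_doubling; [apply NML_Ext | axiom_scheme | intro r].
  apply (doubles_LT (NML_Ext _)); axiom_scheme.
Qed.

Lemma strong_boxdot_LKTB : strong_boxdot LKTB.
Proof.
  apply strong_boxdot_of_doubling; [apply NML_Ext | axiom_scheme | intro r].
  apply (doubles_LKTB (NML_Ext _)); axiom_scheme.
Qed.

Lemma strong_boxdot_LS4 : strong_boxdot LS4.
Proof.
  apply strong_boxdot_of_doubling; [apply NML_Ext | axiom_scheme | intro r].
  apply (doubles_LS4 (NML_Ext _)); axiom_scheme.
Qed.

Lemma strong_boxdot_LS5 : strong_boxdot LS5.
Proof.
  apply strong_boxdot_of_doubling; [apply NML_Ext | axiom_scheme | intro r].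
  apply (doubles_LS5 (NML_Ext _)); axiom_scheme.
Qed.

Lemma strong_boxdot_LS4_2 : strong_boxdot LS4_2.
Proof.
  apply strong_boxdot_of_doubling; [apply NML_Ext | axiom_scheme | intro r].
  apply (doubles_LS4_2 (NML_Ext _)); axiom_scheme.
Qed.

Lemma strong_boxdot_LS4_3 : strong_boxdot LS4_3.
Proof.
  apply strong_boxdot_of_doubling; [apply NML_Ext | axiom_scheme | intro r].
  apply (doubles_LS4_3 (NML_Ext _)); axiom_scheme.
Qed.

Theorem mainTheorem2 :
  (strong_boxdot LT /\ strong_boxdot LKTB /\ strong_boxdot LS4 /\
   strong_boxdot LS5 /\ strong_boxdot LS4_2 /\ strong_boxdot LS4_3) /\
  (forall L : logic, NML L ->
     (forall a, BD L a <-> LT a) -> subset L LT).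
Proof.
  split.
  - exact (conj strong_boxdot_LT (conj strong_boxdot_LKTB (conj strong_boxdot_LS4
             (conj strong_boxdot_LS5 (conj strong_boxdot_LS4_2 strong_boxdot_LS4_3))))).
  - intros L HL HBD. apply (strong_boxdot_LT L HL). intros a Ha. apply HBD, Ha.
Qed.
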